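(* Let $U$ be a finite set and let $Q=(q_{ij})$ and $Q'=(q'_{ij})$ be two PCMC rate families on $U$ with stationary distributions $\pi=\pi_U$ and $\pi'=\pi'_U$ of their chains on $U$. Suppose $A_1,\dots,A_k$ is a contractible partition of $U$ for both $Q$ and $Q'$ with respect to the same $\Lambda=(\lambda_{ij})_{i\ne j}$. Then for every $i\in\{1,\dots,k\}$, \[\sum_{x\in A_i}p_{xU}=\sum_{x\in A_i}p'_{xU},\] i.e. $\pi(A_i)=\pi'(A_i)$.
   Context: Pairwise Choice Markov Chain (PCMC) model: $U$ is a finite set of alternatives; the parameters are off-diagonal rates $q_{ij}\ge 0$ ($i\neq j\in U$) subject to $q_{ij}+q_{ji}\ge 1$ for all distinct $i,j$. $Q_U$ is the $U\times U$ matrix with these off-diagonal entries and diagonal entries $q_{ii}=-\sum_{j\neq i} q_{ij}$; $\pi_U$ is the unique probability vector with $\pi_U^TQ_U=0$, and $p_{iU}=\pi_U(i)$ (similarly $p'_{iU}=\pi'_U(i)$ for $Q'$). For $A\subseteq U$, $\pi(A)=\sum_{x\in A}\pi(x)$. Contractible partition: a partition of $U$ into nonempty sets $A_1,\dots,A_k$ is contractible with respect to $\Lambda=(\lambda_{ij})_{i\ne j\in\{1,\dots,k\}}$ if $q_{ab}=\lambda_{ij}$ for all $a\in A_i$, $b\in A_j$, $i\ne j$ (rates within a single block are unrestricted beyond the PCMC constraints). *)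

From HB Require Import structures.
From mathcomp Require Import all_boot all_order all_algebra.
Set Implicit Arguments. Unset Strict Implicit. Unset Printing Implicit Defensive.
Import Order.TTheory GRing.Theory Num.Theory.
Local Open Scope ring_scope.

Section PCMC.
Variables (R : realFieldType) (U : finType).

Definition is_PCMC (q : U -> U -> R) : Prop :=
  forall i j, i != j -> 0 <= q i j /\ 1 <= q i j + q j i.

Definition QU (q : U -> U -> R) : 'M[R]_#|U| :=
  \matrix_(i, j) (let a := enum_val i in let b := enum_val j in
     if a == b then - \sum_(l | l != a) q a l else q a b).

Definition is_stationary (q : U -> U -> R) (pi : U -> R) : Prop :=
  (forall x, 0 <= pi x) /\ \sum_x pi x = 1 /\
  (\row_i pi (enum_val i)) *m QU q = 0.

(* The partition of U into nonempty blocks A_1..A_k, given by the block map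
   blk (A_i = blk^{-1}(i)), is contractible for q w.r.t. lam. *)
Definition contractible (k : nat) (blk : U -> 'I_k) (lam : 'I_k -> 'I_k -> R)
  (q : U -> U -> R) : Prop :=
  (forall i : 'I_k, exists a, blk a = i) /\
  (forall a b, blk a != blk b -> q a b = lam (blk a) (blk b)).

End PCMC.

(* Stationarity of pi means that the probability flow across every cut of U
   is balanced.  For a contractible partition the flow between two blocks
   only depends on the block masses, so the vector of block masses is
   cut-balanced for the contracted rates lam j l * |A_l|, which again satisfy
   the PCMC constraint.  For such rates a cut-balanced vector is determined
   by its total: cutting the difference D of two of them at {D > 0} shows
   that D vanishes. *)

From HB Require Import structures.
From mathcomp Require Import all_boot all_order all_algebra.
From mathcomp Require Import lra.
Set Implicit Arguments. Unset Strict Implicit. Unset Printing Implicit Defensive.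
Import Order.TTheory GRing.Theory Num.Theory.
Local Open Scope ring_scope.

Section CutBalance.
Variables (R : realFieldType) (I : finType) (r : I -> I -> R).

Definition cut_balanced (P : I -> R) : Prop :=
  forall S : pred I,
  \sum_(i | S i) \sum_(j | ~~ S j) P i * r i j =
  \sum_(i | ~~ S i) \sum_(j | S j) P i * r i j.

Lemma cut_balancedB (P P' : I -> R) :
  cut_balanced P -> cut_balanced P' -> cut_balanced (fun i => P i - P' i).
Proof.
move=> bal bal' S.
under eq_bigr do under eq_bigr do rewrite mulrBl.
under [RHS]eq_bigr do under eq_bigr do rewrite mulrBl.
under eq_bigr do rewrite sumrB; under [RHS]eq_bigr do rewrite sumrB.
by rewrite !sumrB bal bal'.
Qed.

Hypotheses (r_ge0 : forall i j, i != j -> 0 <= r i j)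
           (r_pair_gt0 : forall i j, i != j -> 0 < r i j + r j i).

(* Take S = [pred i | 0 < D i].  Balance across S forces the flow out of S
   to vanish, so every rate out of S is zero, so every rate into S is
   positive, which forces D = 0 off S; then the total of D is positive. *)
Lemma cut_balanced_sum0_le0 (D : I -> R) :
  cut_balanced D -> \sum_i D i = 0 -> forall i, D i <= 0.
Proof.
move=> bal sumD0 i0; rewrite leNgt; apply/negP => Di0.
pose S : pred I := fun i => 0 < D i.
have neqS i j : S i -> ~~ S j -> i != j.
  by move=> Si nSj; apply: contraNneq nSj => <-.
have out_ge0 i : S i -> 0 <= \sum_(j | ~~ S j) D i * r i j.
  move=> Si; apply: sumr_ge0 => j nSj.
  by rewrite mulr_ge0 ?r_ge0 ?(neqS _ _ Si nSj) ?ltW.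
have in_le0 j : ~~ S j -> D j * \sum_(i | S i) r j i <= 0.
  move=> nSj; apply: mulr_le0_ge0; first by rewrite leNgt.
  by apply: sumr_ge0 => i Si; rewrite r_ge0 // eq_sym (neqS _ _ Si nSj).
have flow_in : \sum_(i | ~~ S i) \sum_(j | S j) D i * r i j =
                \sum_(j | ~~ S j) D j * \sum_(i | S i) r j i.
  by apply: eq_bigr => j _; rewrite mulr_sumr.
have out0 : \sum_(i | S i) \sum_(j | ~~ S j) D i * r i j = 0.
  apply/le_anti; rewrite sumr_ge0 // andbT (bal S) flow_in; exact: sumr_le0.
have in0 : \sum_(j | ~~ S j) - (D j * \sum_(i | S i) r j i) = 0.
  by rewrite sumrN -flow_in -(bal S) out0 oppr0.
have rate_out0 i j : S i -> ~~ S j -> r i j = 0.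
  move=> Si nSj; have term_ge0 j' : ~~ S j' -> 0 <= D i * r i j'.
    by move=> nSj'; rewrite mulr_ge0 ?r_ge0 ?(neqS _ _ Si nSj') ?ltW.
  have /eqP := psumr_eq0P term_ge0 (psumr_eq0P out_ge0 out0 Si) nSj.
  by rewrite mulf_eq0 gt_eqF //= => /eqP.
have D_off0 j : ~~ S j -> D j = 0.
  move=> nSj; have in_ge0 j' : ~~ S j' -> 0 <= - (D j' * \sum_(i | S i) r j' i).
    by move=> nSj'; rewrite oppr_ge0 in_le0.
  have r_in_gt0 : 0 < r j i0.
    by have := r_pair_gt0 (neqS _ _ Di0 nSj); rewrite rate_out0 ?add0r.
  have c_gt0 : 0 < \sum_(i | S i) r j i.
    rewrite (bigD1 i0) //= ltr_wpDr //; apply: sumr_ge0 => i /andP[Si _].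
    by rewrite r_ge0 // eq_sym (neqS _ _ Si nSj).
  have /eqP := psumr_eq0P in_ge0 in0 nSj.
  by rewrite oppr_eq0 mulf_eq0 (gt_eqF c_gt0) orbF => /eqP.
have sumS0 : \sum_(i | S i) D i = 0.
  by rewrite -{}[RHS]sumD0 [RHS](bigID S) /= [X in _ + X]big1 ?addr0.
have := psumr_eq0P (fun i Si => ltW Si) sumS0 Di0.
by move/eqP; rewrite gt_eqF.
Qed.

Lemma cut_balanced_eq (P P' : I -> R) :
  cut_balanced P -> cut_balanced P' -> \sum_i P i = \sum_i P' i -> P =1 P'.
Proof.
have le_of (Q Q' : I -> R) : cut_balanced Q -> cut_balanced Q' ->
    \sum_i Q i = \sum_i Q' i -> forall i, Q i <= Q' i.
  move=> bal bal' sumE i; rewrite -subr_le0.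
  by apply: (cut_balanced_sum0_le0 (cut_balancedB bal bal')); rewrite sumrB sumE subrr.
by move=> bal bal' sumE i; apply/le_anti; rewrite !le_of.
Qed.

End CutBalance.

Section Stationary.
Variables (R : realFieldType) (U : finType) (q : U -> U -> R) (pi : U -> R).
Hypothesis pi_stationary : is_stationary q pi.

Lemma stationary_balance y :
  \sum_(x | x != y) pi x * q x y = pi y * \sum_(l | l != y) q y l.
Proof.
case: pi_stationary => _ [_ /matrixP/(_ 0 (enum_rank y))]; rewrite !mxE.
rewrite (reindex (@enum_rank U)) /=; last first.
  by exists enum_val => x _; rewrite ?enum_rankK ?enum_valK.
under eq_bigr => x _ do rewrite !mxE !enum_rankK.
rewrite (bigD1 y) //= eqxx mulrN addrC => /eqP; rewrite subr_eq0 => /eqP <-.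
by apply: eq_bigr => x /negbTE ->.
Qed.

Lemma stationary_cut_balanced : cut_balanced q pi.
Proof.
move=> S; pose F x y := pi x * q x y.
have split_S (G : U -> U -> R) : \sum_(y | S y) \sum_(x | x != y) G x y =
    \sum_(y | S y) \sum_(x | S x && (x != y)) G x y +
    \sum_(y | S y) \sum_(x | ~~ S x) G x y.
  rewrite -big_split; apply: eq_bigr => y Sy; rewrite (bigID S) /=.
  congr (_ + _); apply: eq_bigl => x; rewrite andbC //.
  by apply/andb_idr => nSx; apply: contraNneq nSx => ->.
have inside_S : \sum_(y | S y) \sum_(x | S x && (x != y)) F x y =
                \sum_(y | S y) \sum_(x | S x && (x != y)) F y x.
  rewrite (exchange_big_dep S) => [|y x _ /andP[] //].
  by apply: eq_bigr => x Sx; apply: eq_bigl => y; rewrite Sx eq_sym.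
have E : \sum_(y | S y) \sum_(x | x != y) F x y =
         \sum_(y | S y) \sum_(x | x != y) F y x.
  by apply: eq_bigr => y _; rewrite stationary_balance mulr_sumr.
rewrite !split_S inside_S in E; move/addrI: E => E.
by rewrite [RHS]exchange_big; apply/esym.
Qed.

End Stationary.

Section Contraction.
Variables (R : realFieldType) (U : finType) (k : nat) (blk : U -> 'I_k).

Definition block_mass (f : U -> R) (j : 'I_k) : R := \sum_(x | blk x == j) f x.

Definition block_rate (lam : 'I_k -> 'I_k -> R) (j l : 'I_k) : R :=
  lam j l *+ #|[pred x | blk x == l]|.

Lemma sum_block_mass (f : U -> R) : \sum_j block_mass f j = \sum_x f x.
Proof. by rewrite [RHS](partition_big blk xpredT). Qed.

Lemma sum_mul_block_mass (f : U -> R) (G : 'I_k -> R) (A : pred 'I_k) :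
  \sum_(x | A (blk x)) f x * G (blk x) = \sum_(j | A j) block_mass f j * G j.
Proof.
rewrite (partition_big blk A) //=; apply: eq_bigr => j Aj.
rewrite /block_mass mulr_suml; apply: eq_big => [x | x /andP[_ /eqP ->]] //.
by apply/andb_idl => /eqP ->.
Qed.

Lemma sum_block_const (G : 'I_k -> R) (B : pred 'I_k) :
  \sum_(y | B (blk y)) G (blk y) = \sum_(l | B l) G l *+ #|[pred y | blk y == l]|.
Proof.
rewrite (partition_big blk B) //=; apply: eq_bigr => l Bl.
rewrite -sumr_const; apply: eq_big => [y | y /andP[_ /eqP ->]] //=.
by apply/andb_idl => /eqP ->.
Qed.

Variables (lam : 'I_k -> 'I_k -> R) (q : U -> U -> R).

Lemma contractible_cut_balanced (pi : U -> R) :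
  (forall a b, blk a != blk b -> q a b = lam (blk a) (blk b)) ->
  cut_balanced q pi -> cut_balanced (block_rate lam) (block_mass pi).
Proof.
move=> q_blk bal S.
have block_flow (A B : pred 'I_k) :
    (forall x y, A (blk x) -> B (blk y) -> blk x != blk y) ->
    \sum_(x | A (blk x)) \sum_(y | B (blk y)) pi x * q x y =
    \sum_(j | A j) \sum_(l | B l) block_mass pi j * block_rate lam j l.
  move=> AB; transitivity
      (\sum_(x | A (blk x)) pi x * \sum_(l | B l) block_rate lam (blk x) l).
    apply: eq_bigr => x Ax; rewrite -sum_block_const mulr_sumr.
    by apply: eq_bigr => y By; rewrite q_blk ?AB.
  rewrite (sum_mul_block_mass pi (fun j => \sum_(l | B l) block_rate lam j l)).
  by under eq_bigr do rewrite mulr_sumr.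
have flow_out := block_flow S (predC S); have flow_in := block_flow (predC S) S.
rewrite /= in flow_out flow_in; rewrite -flow_out -?flow_in; first exact: bal.
- by move=> x y nSx Sy; apply: contraNneq nSx => ->.
- by move=> x y Sx; apply: contraNneq => <-.
Qed.

Lemma contractible_is_PCMC :
  is_PCMC q -> contractible blk lam q -> is_PCMC lam.
Proof.
move=> pcq [blk_surj q_blk] j l.
have [[a <-] [b <-]] := (blk_surj j, blk_surj l) => jl.
have ab : a != b by apply: contraNneq jl => ->.
have ba : blk b != blk a by rewrite eq_sym.
by rewrite -!q_blk //; apply: pcq.
Qed.

Hypotheses (lam_PCMC : is_PCMC lam) (blk_surj : forall j, exists a, blk a = j).

Lemma block_rate_ge0 j l : j != l -> 0 <= block_rate lam j l.
Proof. by move/lam_PCMC=> [lam_ge0 _]; apply: mulrn_wge0. Qed.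

Lemma block_rate_pair_gt0 j l :
  j != l -> 0 < block_rate lam j l + block_rate lam l j.
Proof.
move=> jl; have block_gt0 m : (0 < #|[pred x | blk x == m]|)%N.
  by have [a blk_a] := blk_surj m; apply/card_gt0P; exists a; rewrite inE blk_a.
have lj : l != j by rewrite eq_sym.
have [_ lam_sum_ge1] := lam_PCMC jl.
have [lam_jl_gt0 | lam_jl_le0] := ltrP 0 (lam j l).
  by rewrite ltr_pwDl ?block_rate_ge0 // pmulrn_lgt0.
have lam_lj_gt0 : 0 < lam l j by lra.
by rewrite ltr_wpDl ?block_rate_ge0 // pmulrn_lgt0.
Qed.

End Contraction.

Theorem proposition3 (R : realFieldType) (U : finType)
  (q q' : U -> U -> R) (pi pi' : U -> R)
  (k : nat) (blk : U -> 'I_k) (lam : 'I_k -> 'I_k -> R) :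
  is_PCMC q -> is_PCMC q' ->
  is_stationary q pi -> is_stationary q' pi' ->
  contractible blk lam q -> contractible blk lam q' ->
  forall i : 'I_k, \sum_(x | blk x == i) pi x = \sum_(x | blk x == i) pi' x.
Proof.
move=> pcq _ st st' ct ct'.
have lam_PCMC := contractible_is_PCMC pcq ct.
have block_balanced (p : U -> U -> R) (f : U -> R) :
    is_stationary p f -> contractible blk lam p ->
    cut_balanced (block_rate blk lam) (block_mass blk f).
  move=> stf ctp; exact: contractible_cut_balanced ctp.2 (stationary_cut_balanced stf).
apply: (cut_balanced_eq (block_rate_ge0 blk lam_PCMC) (block_rate_pair_gt0 lam_PCMC ct.1)
          (block_balanced _ _ st ct) (block_balanced _ _ st' ct')).
by rewrite !sum_block_mass st.2.1 st'.2.1.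
Qed.
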